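(* Let $\Delta'\ge 3$ be an integer and let $G\in\mathcal{G}_{\Delta'}$. For $i\in\{1,\dots,\Delta'\}$ define $$d_i=\frac{1}{i+1}+(i-1)!\Big(\frac{1}{e}-\sum_{j=0}^{i+1}\frac{(-1)^j}{j!}\Big)\ \text{ if $i$ is even},\qquad d_i=\frac{1}{i+1}+(i-1)!\Big(\sum_{j=0}^{i+1}\frac{(-1)^j}{j!}-\frac{1}{e}\Big)\ \text{ if $i$ is odd},$$ where $e$ is Euler's number. Then $$\alpha(G)\ge \sum_{i=1}^{\Delta'} d_i|V_i(G)|.$$ Moreover, $d_1=1-\frac{1}{e}$ and $d_{i+1}=1-id_i$ for $i=1,\dots,\Delta'-1$.
   Context: All graphs are simple, finite and undirected. For an integer $D\ge 3$, $\mathcal{G}_{D}$ denotes the set of connected graphs $G\neq K_{D+1}$ with maximum degree $D$. For a graph $G$ and $i\ge 1$, $V_i(G)$ is the set of vertices of $G$ of degree $i$. $\alpha(G)$ is the independence number of $G$. *)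

From HB Require Import structures.
From mathcomp Require Import all_boot all_order all_algebra.
From mathcomp Require Import all_classical all_reals all_analysis.
Set Implicit Arguments. Unset Strict Implicit. Unset Printing Implicit Defensive.
Import Order.TTheory GRing.Theory Num.Theory.

Definition simple_graph (T : finType) (e : rel T) : Prop :=
  symmetric e /\ irreflexive e.

Definition deg (T : finType) (e : rel T) (x : T) : nat := #|[set y | e x y]|.

Definition connected_graph (T : finType) (e : rel T) : Prop :=
  forall x y : T, connect e x y.

Definition max_degree_eq (T : finType) (e : rel T) (D : nat) : Prop :=
  (forall x, deg e x <= D) /\ (exists x, deg e x = D).

Definition is_complete_graph (T : finType) (e : rel T) (n : nat) : Prop :=
  #|T| = n /\ (forall x y : T, x != y -> e x y).

Definition in_GD (T : finType) (e : rel T) (D : nat) : Prop :=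
  simple_graph e /\ connected_graph e /\ max_degree_eq e D /\
  ~ is_complete_graph e D.+1.

Definition V_ (T : finType) (e : rel T) (i : nat) : {set T} :=
  [set x | deg e x == i].

Definition independent (T : finType) (e : rel T) (S : {set T}) : bool :=
  [forall x in S, forall y in S, ~~ e x y].

Definition alpha (T : finType) (e : rel T) : nat :=
  \max_(S : {set T} | independent e S) #|S|.

Local Open Scope ring_scope.

Definition dcoef (R : realType) (i : nat) : R :=
  let s := \sum_(0 <= j < i.+2) ((-1) ^+ j / (j`!)%:R) in
  (i.+1%:R)^-1 +
  ((i.-1)`!)%:R * (if ~~ odd i then (expR 1)^-1 - s else s - (expR 1)^-1).

(* Give each vertex x of an induced subgraph G[U] the weight 1/(deg x + 1) if x
   lies in a component of G[U] that is a clique, and d_(deg x) otherwise.  The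
   total weight of G[U] is at most alpha(G[U]) by induction on |U|: it suffices
   to find v such that deleting its closed neighbourhood N[v], which lowers alpha
   by at least 1, lowers the total weight by at most 1.  A clique component is
   deleted outright.  Otherwise let k be the minimum degree.  If a vertex w of
   degree k has a neighbour of larger degree, the weights on N[w] sum to at most
   k d_k + d_(k+1) = 1.  If not, some vertex v of degree k has a neighbour whose
   neighbourhood leaves N[v]; then N[v] weighs at most 1 + d_k - d_(k+1), and the
   vertex z at distance two loses a neighbour, so the new weights of G[U] - N[v]
   exceed the old ones, averaged over clique components, by at least
   d_k - d_(k+1) (this is where the convexity of d is used).  In a connected
   graph other than a complete one there are no clique components, so the total
   weight is the sum in the statement. *)

From HB Require Import structures.
From mathcomp Require Import all_boot all_order all_algebra.
From mathcomp Require Import all_classical all_reals all_analysis.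
From mathcomp Require Import fintype finset fingraph ring lra.
Import Order.TTheory GRing.Theory Num.Theory.
Set Implicit Arguments. Unset Strict Implicit. Unset Printing Implicit Defensive.
Import numFieldNormedType.Exports.
Local Open Scope ring_scope.

Section DCoefficients.
Variable R : realType.

Lemma alternating_inv_fact_sum_bounds n m :
  0 <= (-1) ^+ n * \sum_(n <= j < n + m) (-1 : R) ^+ j / j`!%:R <= (n`!%:R)^-1.
Proof.
elim: m n => [|m IH] n; first by rewrite addn0 big_geq // mulr0 lexx invr_ge0 ler0n.
rewrite big_ltn ?addnS ?ltnS ?leq_addr // mulrDr signrMK.
have := IH n.+1; rewrite addSnnS addnS exprS mulN1r mulNr => /andP[lb ub].
have fact_le : (n.+1`!%:R)^-1 <= (n`!%:R)^-1 :> R.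
  by rewrite lef_pV2 ?posrE ?ltr0n ?fact_gt0 // ler_nat factS leq_pmull.
apply/andP; split; lra.
Qed.

(* The remainder \sum_(j >= n) (-1)^(j - n) / j`! of the series of 1/e. *)
Definition expN1_tail n : R :=
  (-1) ^+ n * ((expR 1)^-1 - series (exp_coeff (-1)) n).

Lemma expN1_tail_ge0 n : 0 <= expN1_tail n.
Proof.
have partial_ge0 m : (n <= m)%N ->
    0 <= (-1) ^+ n * (series (exp_coeff (-1 : R)) m - series (exp_coeff (-1)) n).
  move=> nm; rewrite /series /= (big_cat_nat (leq0n n) nm) /= addrAC subrr add0r.
  by have /andP[] := alternating_inv_fact_sum_bounds n (m - n); rewrite subnKC.
have lim_eq : (expR 1)^-1 = limn (series (exp_coeff (-1 : R))) by rewrite -expRN.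
rewrite /expN1_tail -signr_odd in partial_ge0 *; rewrite lim_eq.
case: (odd n) partial_ge0 => /= partial_ge0.
  rewrite mulN1r oppr_ge0 subr_le0; apply: limr_le; first exact: is_cvg_series_exp_coeff.
  near=> m; have := partial_ge0 m; rewrite mulN1r oppr_ge0 subr_le0; apply.
  by near: m; exact: nbhs_infty_ge.
rewrite mul1r subr_ge0; apply: limr_ge; first exact: is_cvg_series_exp_coeff.
near=> m; have := partial_ge0 m; rewrite mul1r subr_ge0; apply.
by near: m; exact: nbhs_infty_ge.
Unshelve. all: by end_near.
Qed.

Lemma expN1_tailD n : expN1_tail n + expN1_tail n.+1 = (n`!%:R)^-1.
Proof.
rewrite /expN1_tail /series /= big_nat_recr //= exprS mulN1r mulNr -mulrBr.
by rewrite [X in _ * X](_ : _ = exp_coeff (-1) n) ?signrMK //; ring.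
Qed.

Lemma expN1_tail_le n : expN1_tail n * n`!%:R <= 1.
Proof.
have := expN1_tailD n; have := expN1_tail_ge0 n.+1 => tail1_ge0 tailD.
apply: (@le_trans _ _ ((n`!%:R)^-1 * n`!%:R)).
  by apply: ler_wpM2r; [rewrite ler0n | lra].
by rewrite mulVf // pnatr_eq0 -lt0n fact_gt0.
Qed.

Lemma expN1_tail_ge n : n%:R <= expN1_tail n * n.+1`!%:R.
Proof.
have := expN1_tailD n; have := expN1_tail_le n.+1 => tail1_le tailD.
have factE : (n`!%:R)^-1 * n.+1`!%:R = n%:R + 1 :> R.
  by rewrite factS natrM mulrC mulfK ?natr1 // pnatr_eq0 -lt0n fact_gt0.
have -> : expN1_tail n = (n`!%:R)^-1 - expN1_tail n.+1 by lra.
by rewrite mulrBl factE; lra.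
Qed.

Lemma dcoefE i : dcoef R i = (i.+1%:R)^-1 + (i.-1)`!%:R * expN1_tail i.+2.
Proof.
rewrite /dcoef /expN1_tail -signr_odd /= negbK.
by case: (odd i); rewrite /= ?mul1r ?mulN1r ?opprB.
Qed.

Lemma dcoef1 : dcoef R 1 = 1 - (expR 1)^-1.
Proof. by rewrite /dcoef /= !big_nat_recr //= big_geq //= !factS fact0; field. Qed.

Lemma dcoefS i : (0 < i)%N -> dcoef R i.+1 = 1 - i%:R * dcoef R i.
Proof.
case: i => // n _; rewrite !dcoefE /=.
have -> : expN1_tail n.+4 = (n.+3`!%:R)^-1 - expN1_tail n.+3.
  by rewrite -(expN1_tailD n.+3) addrC addKr.
rewrite !factS !natrM.
have n_ge0 := ler0n R n.
have fact_neq0 : n`!%:R != 0 :> R by rewrite pnatr_eq0 -lt0n fact_gt0.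
by field; rewrite fact_neq0 !gt_eqF //; lra.
Qed.

(* Cleared denominators of
   1/(i+1) + 1/(i(i+1)(i+3)) <= d_i <= 1/(i+1) + 1/(i(i+1)(i+2)). *)
Lemma dcoef_lb i : (0 < i)%N ->
  i%:R * (i%:R + 3) + 1 <= i%:R * (i%:R + 1) * (i%:R + 3) * dcoef R i.
Proof.
case: i => // n _; rewrite dcoefE /=.
have := expN1_tail_ge n.+3; rewrite !factS !natrM.
set x : R := n.+1%:R; set F : R := n`!%:R; set t := expN1_tail n.+3.
have -> : n.+2%:R = x + 1 :> R by rewrite natr1.
have -> : n.+3%:R = x + 2 :> R by rewrite -natr1 -/x; ring.
have -> : n.+4%:R = x + 3 :> R by rewrite -!natr1 -/x; ring.
have x_gt0 : 0 < x by rewrite ltr0n.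
move=> tail_ge; have scaled_ge1 : 1 <= t * F * x * (x + 1) * (x + 3).
  rewrite -(ler_pM2l (_ : 0 < x + 2)) ?mulr1; last lra.
  by rewrite [X in _ <= X](_ : _ = t * ((x + 3) * ((x + 2) * ((x + 1) * (x * F))))) //; ring.
have -> : x * (x + 1) * (x + 3) * ((x + 1)^-1 + F * t) =
  x * (x + 3) + t * F * x * (x + 1) * (x + 3) by field; lra.
lra.
Qed.

Lemma dcoef_ub i : (0 < i)%N -> i%:R * (i%:R + 2) * dcoef R i <= i%:R + 1.
Proof.
case: i => // n _; rewrite dcoefE /=.
have := expN1_tail_le n.+3; rewrite !factS !natrM.
set x : R := n.+1%:R; set F : R := n`!%:R; set t := expN1_tail n.+3.
have -> : n.+2%:R = x + 1 :> R by rewrite natr1.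
have -> : n.+3%:R = x + 2 :> R by rewrite -natr1 -/x; ring.
have x_gt0 : 0 < x by rewrite ltr0n.
move=> tail_le.
have -> : x * (x + 2) * ((x + 1)^-1 + F * t) =
  (x * (x + 2) + t * ((x + 2) * ((x + 1) * (x * F)))) / (x + 1) by field; lra.
rewrite ler_pdivrMr; lra.
Qed.

Lemma dcoef_ge0 i : (0 < i)%N -> 0 <= dcoef R i.
Proof.
move=> i_gt0; have := dcoef_lb i_gt0; have : 0 < i%:R :> R by rewrite ltr0n.
set x : R := i%:R => x_gt0.
have : 0 < x * (x + 1) * (x + 3) by rewrite !mulr_gt0 //; lra.
have : 0 <= x * (x + 3) by rewrite mulr_ge0 //; lra.
nra.
Qed.

Lemma dcoef_succ_le n : dcoef R n.+1 <= dcoef R n.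
Proof.
case: n => [|n].
  rewrite dcoef1 dcoefE /= fact0 invr1 mul1r.
  have := expN1_tail_ge0 2; have := expR_gt0 (1 : R); rewrite -invr_gt0; lra.
rewrite dcoefS //; have := dcoef_lb (ltn0Sn n); have : 0 < n.+1%:R :> R by rewrite ltr0n.
set x : R := n.+1%:R => x_gt0.
have : 0 < x * (x + 3) by rewrite mulr_gt0 //; lra.
nra.
Qed.

Lemma dcoef_nonincreasing : nonincreasing_seq (dcoef R).
Proof. exact/nonincreasing_seqP/dcoef_succ_le. Qed.

Lemma dcoef_sum_le1 m : m%:R * dcoef R m + dcoef R m.+1 <= 1.
Proof.
case: m => [|m]; last by rewrite (dcoefS (ltn0Sn m)); lra.
by rewrite mul0r add0r dcoef1 lerBlDr lerDl invr_ge0 ltW ?expR_gt0.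
Qed.

Lemma dcoef_drop_le k : (0 < k)%N -> dcoef R k - dcoef R k.+1 <= dcoef R k.+1.
Proof.
move=> k_gt0; rewrite dcoefS //.
have := dcoef_ub k_gt0; have := dcoef_ge0 k_gt0; have : 1 <= k%:R :> R by rewrite ler1n.
set x : R := k%:R => x_ge1 d_ge0.
have : 0 <= (x - 1) * dcoef R k by rewrite mulr_ge0 // subr_ge0.
nra.
Qed.

Lemma dcoef_convex k : (1 < k)%N ->
  dcoef R k - dcoef R k.+1 <= dcoef R k.-1 - dcoef R k.
Proof.
case: k => [|j] // /ltnSE j_gt0; rewrite /= !dcoefS // -natr1.
have := dcoef_lb j_gt0; have : 1 <= j%:R :> R by rewrite ler1n.
set x : R := j%:R => x_ge1.
have : 0 < x * (x + 1) * (x + 3) by rewrite !mulr_gt0 //; lra.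
have : 0 <= x * x + 3 * x + 1 by nra.
nra.
Qed.

End DCoefficients.

Section InducedSubgraphs.
Variables (T : finType) (e : rel T).
Hypotheses (e_sym : symmetric e) (e_irr : irreflexive e).
Implicit Types (U W S : {set T}) (x y z v w : T).

Definition nbhd U x := [set y in U | e x y].
Definition cnbhd U x := x |: nbhd U x.
Definition deg_in U x := #|nbhd U x|.
(* [x] lies in a connected component of the subgraph induced by [U] which is a
   clique, namely [cnbhd U x]. *)
Definition in_clique_comp U x := [forall y in nbhd U x, cnbhd U y == cnbhd U x].
Definition no_clique_comp U := forall x, x \in U -> ~~ in_clique_comp U x.
Definition alpha_in U := \max_(S : {set T} | (S \subset U) && independent e S) #|S|.

Lemma in_nbhd U x y : (y \in nbhd U x) = (y \in U) && e x y.
Proof. by rewrite inE. Qed.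

Lemma in_cnbhd U x y : (y \in cnbhd U x) = (y == x) || (y \in nbhd U x).
Proof. by rewrite !inE. Qed.

Lemma nbhd_sub U x : nbhd U x \subset U.
Proof. by apply/subsetP => y; rewrite in_nbhd => /andP[]. Qed.

Lemma nbhdS U W x : W \subset U -> nbhd W x \subset nbhd U x.
Proof.
by move=> WU; apply/subsetP => y; rewrite !in_nbhd => /andP[/(subsetP WU) -> ->].
Qed.

Lemma card_cnbhd U x : #|cnbhd U x| = (deg_in U x).+1.
Proof. by rewrite cardsU1 in_nbhd e_irr andbF. Qed.

Lemma cnbhd_sub U x : x \in U -> cnbhd U x \subset U.
Proof. by move=> xU; rewrite subUset sub1set xU nbhd_sub. Qed.

Lemma in_cnbhdC U x y : x \in U -> y \in U -> (y \in cnbhd U x) = (x \in cnbhd U y).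
Proof. by move=> xU yU; rewrite !in_cnbhd !in_nbhd xU yU eq_sym e_sym. Qed.

Lemma deg_inS U W x : W \subset U -> (deg_in W x <= deg_in U x)%N.
Proof. by move/(nbhdS x)/subset_leq_card. Qed.

Lemma deg_in_lt U W x y :
  W \subset U -> y \in nbhd U x -> y \notin W -> (deg_in W x < deg_in U x)%N.
Proof.
move=> WU yN yW; apply/proper_card/properP; split; first exact: nbhdS.
by exists y; rewrite // in_nbhd (negbTE yW).
Qed.

Lemma deg_in_gt0 U x : ~~ in_clique_comp U x -> (0 < deg_in U x)%N.
Proof.
apply: contraR; rewrite lt0n negbK => /eqP/cards0_eq N0.
by apply/forall_inP => y; rewrite N0 inE.
Qed.

Section CliqueComponent.
Variables (U : {set T}) (x : T).
Hypothesis x_cc : in_clique_comp U x.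

Lemma clique_comp_cnbhd y : y \in cnbhd U x -> cnbhd U y = cnbhd U x.
Proof. by rewrite in_cnbhd => /orP[/eqP -> // | /(forall_inP x_cc)/eqP]. Qed.

Lemma in_clique_comp_cnbhd y : y \in cnbhd U x -> in_clique_comp U y.
Proof.
move=> yN; apply/forall_inP => z zN; have zNx : z \in cnbhd U x.
  by rewrite -(clique_comp_cnbhd yN) in_cnbhd zN orbT.
by rewrite (clique_comp_cnbhd zNx) (clique_comp_cnbhd yN).
Qed.

Lemma clique_comp_deg y : y \in cnbhd U x -> deg_in U y = deg_in U x.
Proof. by move=> yN; apply: succn_inj; rewrite -!card_cnbhd (clique_comp_cnbhd yN). Qed.

End CliqueComponent.

Lemma alpha_in_del_cnbhd U v :
  v \in U -> ((alpha_in (U :\: cnbhd U v)).+1 <= alpha_in U)%N.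
Proof.
move=> vU; rewrite /alpha_in.
have [|S /andP[SW /forall_inP S_ind] ->] :=
  @eq_bigmax_cond _ (fun S => (S \subset U :\: cnbhd U v) && independent e S) (fun S => #|S|).
  apply/card_gt0P; exists set0; rewrite unfold_in sub0set /=.
  by apply/forall_inP => x; rewrite inE.
have v_indep z : z \in S -> ~~ e v z.
  move=> /(subsetP SW); rewrite !inE negb_or => /andP[/andP[_]].
  by move=> + zU; rewrite zU.
have vS : v \notin S by apply/negP => /(subsetP SW); rewrite !inE eqxx.
rewrite (_ : #|S|.+1 = #|v |: S|)%N; last by rewrite cardsU1 vS.
apply: leq_bigmax_cond.
rewrite subUset sub1set vU (subset_trans SW (subsetDl _ _)) /=.
apply/forall_inP => x /setU1P[-> | xS]; apply/forall_inP => y /setU1P[-> | yS].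
- by rewrite e_irr.
- exact: v_indep.
- by rewrite e_sym v_indep.
- exact: (forall_inP (S_ind x xS)).
Qed.

Lemma clique_comp_deg_lt U W x : W \subset U -> x \in W ->
    in_clique_comp W x -> ~~ in_clique_comp U x ->
  exists2 y, y \in cnbhd W x & (deg_in W y < deg_in U y)%N.
Proof.
move=> WU xW x_cc; apply: contraNP => no_drop.
have NW y : y \in cnbhd W x -> nbhd W y = nbhd U y.
  move=> yN; apply/eqP; rewrite eqEcard nbhdS //= leqNgt.
  by apply/negP => lt; apply: no_drop; exists y.
have xN : x \in cnbhd W x by rewrite in_cnbhd eqxx.
apply/forall_inP => y; rewrite -(NW x xN) => yN.
have yN' : y \in cnbhd W x by rewrite in_cnbhd yN orbT.
by rewrite /cnbhd -(NW x xN) -(NW y yN'); apply: (forall_inP x_cc).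
Qed.

Lemma nbhd_closed U W : W \subset U ->
    (forall x y, x \in W -> y \in U -> e x y -> y \in W) ->
  forall x, x \in W -> nbhd W x = nbhd U x.
Proof.
move=> WU W_closed x xW; apply/eqP; rewrite eqEsubset nbhdS //=.
by apply/subsetP => y; rewrite !in_nbhd => /andP[yU exy]; rewrite (W_closed x y) ?exy.
Qed.

Section Weights.
Variable R : realType.

Definition weight U x : R :=
  if in_clique_comp U x then ((deg_in U x).+1%:R)^-1 else dcoef R (deg_in U x).

Definition total_weight U := \sum_(x in U) weight U x.

Lemma weight_closed U W : W \subset U ->
    (forall x y, x \in W -> y \in U -> e x y -> y \in W) ->
  forall x, x \in W -> weight W x = weight U x.
Proof.
move=> WU W_closed x xW; have NW := nbhd_closed WU W_closed.
rewrite /weight /deg_in /in_clique_comp (NW x xW).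
congr (if _ then _ else _); apply: eq_forallb_in => y; rewrite in_nbhd => /andP[yU exy].
by rewrite /cnbhd (NW x xW) (NW y (W_closed x y xW yU exy)).
Qed.

Lemma total_weight_del_clique_comp U v : v \in U -> in_clique_comp U v ->
  total_weight U = 1 + total_weight (U :\: cnbhd U v).
Proof.
move=> vU v_cc; rewrite /total_weight (big_setID (cnbhd U v)) /= (setIidPr (cnbhd_sub vU)).
congr (_ + _).
  rewrite (eq_bigr (fun=> ((deg_in U v).+1%:R)^-1)); last first.
    by move=> x xN; rewrite /weight (in_clique_comp_cnbhd v_cc xN) (clique_comp_deg v_cc xN).
  by rewrite sumr_const card_cnbhd -(mulr_natr (_^-1)) mulVf ?pnatr_eq0.
apply: eq_bigr => x xW; apply/esym/weight_closed => //; first exact: subsetDl.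
move=> a b /setDP[aU aN] bU eab; rewrite in_setD bU andbT.
apply: contra aN => bN; rewrite -(clique_comp_cnbhd v_cc bN).
by rewrite in_cnbhd in_nbhd aU e_sym eab orbT.
Qed.

Definition deg_weight U x : R := dcoef R (deg_in U x).

Definition clique_avg W (f : T -> R) x : R :=
  if in_clique_comp W x then (#|cnbhd W x|%:R)^-1 * \sum_(y in cnbhd W x) f y
  else f x.

Lemma sum_clique_avg W (f : T -> R) :
  \sum_(x in W) clique_avg W f x = \sum_(x in W) f x.
Proof.
rewrite (bigID (in_clique_comp W)) [RHS](bigID (in_clique_comp W)) /=.
congr (_ + _); last by apply: eq_bigr => x /andP[_ /negbTE x_ncc]; rewrite /clique_avg x_ncc.
have cc_in y x : y \in W -> in_clique_comp W y -> x \in cnbhd W y ->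
    (x \in W) && in_clique_comp W x.
  by move=> yW y_cc xN; rewrite (subsetP (cnbhd_sub yW)) ?(in_clique_comp_cnbhd y_cc).
rewrite (eq_bigr (fun x => \sum_(y | (y \in W) && in_clique_comp W y && (x \in cnbhd W y))
    (#|cnbhd W y|%:R)^-1 * f y)); last first.
  move=> x /andP[xW x_cc]; rewrite /clique_avg x_cc mulr_sumr.
  apply: eq_big => [y | y yN]; last by rewrite (clique_comp_cnbhd x_cc yN).
  apply/idP/idP => [yN | /andP[/andP[yW _]]]; last by rewrite in_cnbhdC.
  by rewrite (cc_in x) // -in_cnbhdC // (subsetP (cnbhd_sub xW)).
rewrite (exchange_big_dep (fun y => (y \in W) && in_clique_comp W y)) /=; last first.
  by move=> x y _ /andP[].
apply: eq_bigr => y /andP[yW y_cc].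
rewrite (eq_bigl (fun x => x \in cnbhd W y)) => [|x]; last first.
  by case xN: (x \in cnbhd W y); rewrite yW y_cc ?andbF ?andbT ?(cc_in y).
by rewrite sumr_const -mulrnAl -mulr_natr mulVf ?mul1r // card_cnbhd pnatr_eq0.
Qed.

Lemma sum_deg_weight_le U (A : {set T}) k : (forall y, y \in A -> k <= deg_in U y)%N ->
  \sum_(y in A) deg_weight U y <= #|A|%:R * dcoef R k.
Proof.
move=> A_deg; rewrite mulr_natl -sumr_const.
by apply: ler_sum => y /A_deg; apply: dcoef_nonincreasing.
Qed.

Lemma clique_avg_le_weight U W x : W \subset U -> no_clique_comp U -> x \in W ->
  clique_avg W (deg_weight U) x <= weight W x.
Proof.
move=> WU U_ncc xW; rewrite /clique_avg /weight.
case: ifP => [x_cc | _]; last exact/dcoef_nonincreasing/deg_inS.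
have [y0 y0N y0_lt] := clique_comp_deg_lt WU xW x_cc (U_ncc x (subsetP WU x xW)).
rewrite card_cnbhd -[X in _ <= X]mulr1 ler_wpM2l ?invr_ge0 ?ler0n //.
have card_del : #|cnbhd W x :\ y0| = deg_in W x.
  by apply: succn_inj; rewrite -card_cnbhd (cardsD1 y0 (cnbhd W x)) y0N.
have rest_le : \sum_(y in cnbhd W x :\ y0) deg_weight U y <=
    (deg_in W x)%:R * dcoef R (deg_in W x).
  rewrite -{1}card_del; apply: sum_deg_weight_le => y /setD1P[_ yN].
  by rewrite -(clique_comp_deg x_cc yN) deg_inS.
rewrite (big_setD1 y0 y0N) /= addrC.
apply: (le_trans _ (dcoef_sum_le1 R (deg_in W x))); rewrite lerD //.
by apply: dcoef_nonincreasing; rewrite -(clique_comp_deg x_cc y0N).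
Qed.

Definition gain U W := \sum_(x in W) (weight W x - clique_avg W (deg_weight U) x).

Lemma gain_ge_sum U W S : W \subset U -> no_clique_comp U -> S \subset W ->
  \sum_(x in S) (weight W x - clique_avg W (deg_weight U) x) <= gain U W.
Proof.
move=> WU U_ncc SW; rewrite /gain [X in _ <= X](big_setID S) /= (setIidPr SW) lerDl.
by apply: sumr_ge0 => x /setDP[xW _]; rewrite subr_ge0 clique_avg_le_weight.
Qed.

Lemma gain_clique_comp U W z : in_clique_comp W z ->
  \sum_(x in cnbhd W z) (weight W x - clique_avg W (deg_weight U) x) =
  1 - \sum_(y in cnbhd W z) deg_weight U y.
Proof.
move=> z_cc; set c : R := ((deg_in W z).+1%:R)^-1.
rewrite (eq_bigr (fun=> c - c * \sum_(y in cnbhd W z) deg_weight U y)) => [|x xN].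
  have n_ge0 := ler0n R (deg_in W z).
  by rewrite sumr_const card_cnbhd -mulr_natr /c -natr1; field; lra.
rewrite /weight /clique_avg (in_clique_comp_cnbhd z_cc xN) (clique_comp_deg z_cc xN).
by rewrite (clique_comp_cnbhd z_cc xN) card_cnbhd.
Qed.

Lemma total_weight_no_clique_comp U : no_clique_comp U ->
  total_weight U = \sum_(x in U) deg_weight U x.
Proof. by move=> U_ncc; apply: eq_bigr => x xU; rewrite /weight (negbTE (U_ncc x xU)). Qed.

Lemma total_weight_del_le U w del : no_clique_comp U -> w \in U ->
    \sum_(y in cnbhd U w) deg_weight U y <= 1 + del ->
    del <= gain U (U :\: cnbhd U w) ->
  total_weight U <= 1 + total_weight (U :\: cnbhd U w).
Proof.
move=> U_ncc wU N_le gain_ge.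
rewrite total_weight_no_clique_comp // (big_setID (cnbhd U w)) /= (setIidPr (cnbhd_sub wU)).
rewrite -(sum_clique_avg (U :\: cnbhd U w)).
by move: gain_ge; rewrite /gain sumrB /total_weight; lra.
Qed.

Section MinimumDegree.
Variables (U : {set T}) (v : T).
Hypotheses (U_ncc : no_clique_comp U) (vU : v \in U).
Hypothesis v_min : forall x, x \in U -> (deg_in U v <= deg_in U x)%N.

Let deg_gt0 : (0 < deg_in U v)%N.
Proof. exact/deg_in_gt0/U_ncc. Qed.

Lemma sum_cnbhd_le1_of_higher_nbr w y : w \in U -> deg_in U w = deg_in U v ->
    y \in nbhd U w -> (deg_in U v < deg_in U y)%N ->
  \sum_(x in cnbhd U w) deg_weight U x <= 1.
Proof.
move=> wU w_deg yN y_deg.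
have card_del : #|nbhd U w :\ y| = (deg_in U v).-1.
  by rewrite -w_deg /deg_in (cardsD1 y (nbhd U w)) yN.
have rest_le : \sum_(x in nbhd U w :\ y) deg_weight U x <=
    (deg_in U v).-1%:R * dcoef R (deg_in U v).
  rewrite -card_del; apply: sum_deg_weight_le => x /setD1P[_].
  by rewrite in_nbhd => /andP[xU _]; apply: v_min.
have y_le : deg_weight U y <= dcoef R (deg_in U v).+1 by apply: dcoef_nonincreasing.
have := dcoef_sum_le1 R (deg_in U v); rewrite -[in X in X * _](prednK deg_gt0) -natr1.
rewrite /cnbhd big_setU1 ?in_nbhd ?e_irr ?andbF //= (big_setD1 y yN) /= /deg_weight w_deg.
rewrite /deg_weight in y_le; lra.
Qed.

Lemma sum_cnbhd_le_drop :
  \sum_(x in cnbhd U v) deg_weight U x <=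
  1 + (dcoef R (deg_in U v) - dcoef R (deg_in U v).+1).
Proof.
apply: le_trans (sum_deg_weight_le (k := deg_in U v) _) _ => [x xN|].
  by apply/v_min/(subsetP (cnbhd_sub vU)).
by rewrite card_cnbhd -natr1 (dcoefS R deg_gt0); lra.
Qed.

Lemma gain_ge_drop y z : y \in nbhd U v -> z \in nbhd U y -> z \notin cnbhd U v ->
    deg_in U z = deg_in U v ->
  dcoef R (deg_in U v) - dcoef R (deg_in U v).+1 <= gain U (U :\: cnbhd U v).
Proof.
move=> yN zN zNv z_deg; set W := U :\: cnbhd U v.
have WU : W \subset U := subsetDl U (cnbhd U v).
have zU : z \in U by move: zN; rewrite in_nbhd => /andP[].
have zW : z \in W by rewrite in_setD zNv zU.
have z_lost : (deg_in W z < deg_in U v)%N.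
  rewrite -z_deg; apply: (@deg_in_lt _ _ _ y WU).
    by move: zN yN; rewrite !in_nbhd e_sym => /andP[_ ->] /andP[->].
  by rewrite in_setD in_cnbhd yN orbT.
have drop_le := dcoef_drop_le R deg_gt0.
have [z_cc | z_ncc] := boolP (in_clique_comp W z).
  apply: le_trans (gain_ge_sum WU U_ncc (cnbhd_sub zW)); rewrite gain_clique_comp //.
  have sum_le : \sum_(x in cnbhd W z) deg_weight U x <=
      (deg_in W z).+1%:R * dcoef R (deg_in U v).
    rewrite -card_cnbhd; apply: sum_deg_weight_le => x xN; apply: v_min.
    exact/(subsetP WU)/(subsetP (cnbhd_sub zW)).
  have : (deg_in W z).+1%:R * dcoef R (deg_in U v) <= (deg_in U v)%:R * dcoef R (deg_in U v).
    by rewrite ler_wpM2r ?dcoef_ge0 ?ler_nat.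
  have := dcoefS R deg_gt0; lra.
apply: le_trans (gain_ge_sum WU U_ncc (_ : [set z] \subset W)); last by rewrite sub1set.
rewrite big_set1 /weight /clique_avg (negbTE z_ncc) /deg_weight z_deg.
have deg_ge2 : (1 < deg_in U v)%N by apply: leq_ltn_trans z_lost; exact: deg_in_gt0.
apply: le_trans (dcoef_convex R deg_ge2) _; rewrite lerD2r.
by apply: dcoef_nonincreasing; rewrite -ltnS prednK.
Qed.

End MinimumDegree.

Lemma total_weight_del_no_clique_comp U : no_clique_comp U -> U != set0 ->
  exists2 v, v \in U & total_weight U <= 1 + total_weight (U :\: cnbhd U v).
Proof.
move=> U_ncc /set0Pn[x0 x0U]; have [v vU v_min] := arg_minnP (deg_in U) x0U.
have higher_nbr w y : w \in U -> deg_in U w = deg_in U v -> y \in nbhd U w ->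
    (deg_in U v < deg_in U y)%N ->
    exists2 v, v \in U & total_weight U <= 1 + total_weight (U :\: cnbhd U v).
  move=> wU w_deg yN y_deg; exists w => //.
  apply: (@total_weight_del_le _ _ 0 U_ncc wU).
    by rewrite addr0 (sum_cnbhd_le1_of_higher_nbr U_ncc vU v_min wU w_deg yN).
  by apply: le_trans (gain_ge_sum _ U_ncc (sub0set _)); rewrite ?big_set0 ?subsetDl.
have [/exists_inP[y yN y_deg] | /exists_inP no_higher] :=
  boolP [exists y in nbhd U v, deg_in U v < deg_in U y]%N.
  exact: higher_nbr vU erefl yN y_deg.
have [y yN yN_ne] : exists2 y, y \in nbhd U v & cnbhd U y != cnbhd U v.
  by apply/exists_inP; rewrite -negb_forall_in; apply: U_ncc.
have nbr_deg x : x \in nbhd U v -> deg_in U x = deg_in U v.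
  move=> xN; apply/eqP; rewrite eqn_leq leqNgt; apply/andP; split.
    by apply/negP => x_deg; apply: no_higher; exists x.
  by apply/v_min; move: xN; rewrite in_nbhd => /andP[].
have [z zNy zNv] : exists2 z, z \in cnbhd U y & z \notin cnbhd U v.
  apply/exists_inP; rewrite -negb_forall_in; apply: contra yN_ne => /forall_inP sub.
  by rewrite eqEcard !card_cnbhd nbr_deg // leqnn andbT; apply/subsetP.
have zN : z \in nbhd U y.
  move: zNy; rewrite in_cnbhd => /orP[/eqP zy|//].
  by move: zNv; rewrite zy in_cnbhd yN orbT.
have yU : y \in U by move: yN; rewrite in_nbhd => /andP[].
have [z_deg_gt | z_deg_le] := ltnP (deg_in U v) (deg_in U z).
  exact: higher_nbr yU (nbr_deg y yN) zN z_deg_gt.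
have z_deg : deg_in U z = deg_in U v.
  by apply/eqP; rewrite eqn_leq z_deg_le v_min //; apply: (subsetP (nbhd_sub U y)).
exists v => //; apply: (total_weight_del_le U_ncc vU).
  exact: sum_cnbhd_le_drop U_ncc vU v_min.
exact: (gain_ge_drop U_ncc vU v_min yN zN zNv z_deg).
Qed.

Lemma total_weight_le_alpha U : total_weight U <= (alpha_in U)%:R.
Proof.
move: {2}#|U| (leqnn #|U|) => n; elim: n U => [|n IH] U U_card.
  by move: U_card; rewrite leqn0 cards_eq0 => /eqP ->; rewrite /total_weight big_set0.
have [-> | U_ne0] := eqVneq U set0; first by rewrite /total_weight big_set0.
have [v vU drop] : exists2 v, v \in U &
    total_weight U <= 1 + total_weight (U :\: cnbhd U v).
  have [/exists_inP[v vU v_cc] | /exists_inP no_cc] :=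
    boolP [exists v in U, in_clique_comp U v].
    by exists v; rewrite // (total_weight_del_clique_comp vU v_cc).
  apply: total_weight_del_no_clique_comp U_ne0 => x xU.
  by apply/negP => x_cc; apply: no_cc; exists x.
have W_card : (#|U :\: cnbhd U v| <= n)%N.
  rewrite -ltnS; apply: leq_trans U_card; apply/proper_card/properP.
  by split; [exact: subsetDl | exists v; rewrite // in_setD in_cnbhd eqxx].
have := alpha_in_del_cnbhd vU; rewrite -(ler_nat R) -natr1.
by have := IH _ W_card; lra.
Qed.

End Weights.

End InducedSubgraphs.

Lemma deg_in_setT (T : finType) (e : rel T) x : deg_in e [set: T] x = deg e x.
Proof. by apply: eq_card => y; rewrite !inE. Qed.

Lemma alpha_in_setT (T : finType) (e : rel T) : alpha_in e [set: T] = alpha e.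
Proof. by apply: eq_bigl => S; rewrite subsetT. Qed.

Lemma in_GD_no_clique_comp (T : finType) (e : rel T) D :
  in_GD e D -> no_clique_comp e [set: T].
Proof.
move=> [[e_sym e_irr] [conn [[_ [x1 x1_deg]] not_complete]]] x _; apply/negP => x_cc.
have N_closed : closed e (cnbhd e [set: T] x).
  move=> a b eab; apply/idP/idP => aN; rewrite -(clique_comp_cnbhd x_cc aN) in_cnbhd in_nbhd.
    by rewrite in_setT eab orbT.
  by rewrite in_setT e_sym eab orbT.
have in_N y : y \in cnbhd e [set: T] x.
  by rewrite -(closed_connect N_closed (conn x y)) in_cnbhd eqxx.
apply: not_complete; split => [|y z yz].
  rewrite -x1_deg -deg_in_setT (clique_comp_deg e_irr x_cc (in_N x1)) -(card_cnbhd e_irr).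
  by apply: eq_card => y; rewrite in_N.
have := in_N z; rewrite -(clique_comp_cnbhd x_cc (in_N y)) in_cnbhd in_nbhd.
by rewrite eq_sym (negbTE yz) in_setT.
Qed.

Lemma sum_card_level (R : realType) (T : finType) (f : nat -> R) (g : T -> nat) m n :
    (forall x, m <= g x < n)%N ->
  \sum_(m <= i < n) f i * #|[set x | g x == i]|%:R = \sum_x f (g x).
Proof.
move=> g_range; under eq_bigr do rewrite -sum1_card big_mkcond natr_sum mulr_sumr /=.
rewrite exchange_big /=; apply: eq_bigr => x _.
rewrite (bigD1_seq (g x)) ?mem_index_iota ?g_range ?iota_uniq //= inE eqxx mulr1.
by rewrite big1 ?addr0 // => i /negbTE gi; rewrite inE eq_sym gi mulr0.
Qed.

Theorem theorem5 (R : realType) (D : nat) (T : finType) (e : rel T) :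
  (3 <= D)%N -> in_GD e D ->
  (\sum_(1 <= i < D.+1) dcoef R i * (#|V_ e i|)%:R <= (alpha e)%:R)
  /\ dcoef R 1 = 1 - (expR 1)^-1
  /\ (forall i : nat, (1 <= i <= D.-1)%N ->
        dcoef R i.+1 = 1 - i%:R * dcoef R i).
Proof.
move=> _ GD; split; last first.
  by split=> [|i /andP[i_gt0 _]]; [exact: dcoef1 | exact: dcoefS].
have [[e_sym e_irr] [_ [[deg_le _] _]]] := GD.
have U_ncc := in_GD_no_clique_comp GD.
rewrite /V_ (sum_card_level (dcoef R) (g := deg e)) => [|x]; last first.
  by rewrite ltnS deg_le -deg_in_setT deg_in_gt0 ?U_ncc.
rewrite -alpha_in_setT.
have -> : \sum_x dcoef R (deg e x) = total_weight e R [set: T].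
  rewrite total_weight_no_clique_comp //.
  by apply: eq_big => [x | x _]; rewrite ?inE // /deg_weight deg_in_setT.
exact: total_weight_le_alpha.
Qed.
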